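(* Let $\varepsilon>0$, $\Omega\subset\mathbb{R}^2$ bounded open, $u\in\mathcal{SF}_\varepsilon(\Omega)$, $R\in\mathcal{R}_\varepsilon(u)$, and let $S_R(u)\subseteq\mathbb{S}^2$ be an admissible interpolation surface for $u$ in $R$. Then there exists $u_R\in\mathbb{S}^2$ such that $u_R\in S_R(u)$ and $u_R\cdot z\ge0$ for every $z\in S_R(u)$.
   Context: $\mathcal{L}=\{ae_1+b\hat e_2:a,b\in\mathbb{Z}\}$ with $e_1=(1,0)$, $\hat e_2=\frac12(1,\sqrt3)$, $\mathcal{L}_\varepsilon=\varepsilon\mathcal{L}$, $\mathcal{L}_\varepsilon(R)=\mathcal{L}_\varepsilon\cap R$; $\mathcal{T}_\varepsilon$ is the set of closed triangles with vertices in $\mathcal{L}_\varepsilon$ pairwise at distance $\varepsilon$; $\mathcal{E}_\varepsilon$ the set of segments $[i,j]$, $i,j\in\mathcal{L}_\varepsilon$, $|i-j|=\varepsilon$. $n=(0,0,1)$; $\mathcal{SF}_\varepsilon(\Omega)$ is the set of $u:\mathcal{L}_\varepsilon\to\mathbb{S}^2$ with $u=n$ on $\mathcal{L}_\varepsilon\setminus\Omega$. $\mathcal{N}_\varepsilon(u)=\{[i,j]\in\mathcal{E}_\varepsilon:u(i)=-u(j)\}$. Two triangles of $\mathcal{T}_\varepsilon$ are neighbours if their intersection is an edge in $\mathcal{N}_\varepsilon(u)$, connected if joined by a finite chain of neighbours; $\mathcal{R}_\varepsilon(u)$ is the set of unions of pairwise connected triangles maximal under inclusion. $\mathrm{cone}_R(u)=\{\sum_{w\in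 u(\mathcal{L}_\varepsilon(R))}\lambda_ww:\lambda_w\ge0\}$. $S_R(u)$ is an admissible interpolation surface for $u$ in $R$ if: when $\mathrm{cone}_R(u)$ is not a linear subspace of $\mathbb{R}^3$, $S_R(u)=\{v/|v|:v=\sum_w\lambda_ww,\ \lambda_w\ge0,\ \sum_w\lambda_w>0\}$; when it is a linear subspace, $S_R(u)=\{v/|v|:v=\sum_w\lambda_ww+\tau h,\ \lambda_w,\tau\ge0,\ \sum_w\lambda_w+\tau>0\}$ for some $h\in\mathbb{S}^2$ orthogonal to $\mathrm{cone}_R(u)$ (sums over $w\in u(\mathcal{L}_\varepsilon(R))$). *)

From Stdlib Require Import Reals Lra List Relations.
Open Scope R_scope.

Definition pt2 := (R * R)%type.
Definition vec3 := (R * R * R)%type.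

Definition dist2 (x y : pt2) : R :=
  sqrt ((fst x - fst y) ^ 2 + (snd x - snd y) ^ 2).

Definition dot3 (v w : vec3) : R :=
  let '(v1, v2, v3) := v in let '(w1, w2, w3) := w in v1 * w1 + v2 * w2 + v3 * w3.
Definition norm3 (v : vec3) : R := sqrt (dot3 v v).
Definition add3 (v w : vec3) : vec3 :=
  let '(v1, v2, v3) := v in let '(w1, w2, w3) := w in (v1 + w1, v2 + w2, v3 + w3).
Definition scal3 (a : R) (v : vec3) : vec3 :=
  let '(v1, v2, v3) := v in (a * v1, a * v2, a * v3).
Definition opp3 (v : vec3) : vec3 := scal3 (-1) v.
Definition zero3 : vec3 := (0, 0, 0).

Definition on_sphere (v : vec3) : Prop := norm3 v = 1.

Definition nvec : vec3 := (0, 0, 1).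

Definition in_lattice (eps : R) (x : pt2) : Prop :=
  exists a b : Z,
    x = (eps * (IZR a * 1 + IZR b * (1 / 2)), eps * (IZR a * 0 + IZR b * (sqrt 3 / 2))).

Definition set_eq (A B : pt2 -> Prop) : Prop := forall x, A x <-> B x.
Definition subset2 (A B : pt2 -> Prop) : Prop := forall x, A x -> B x.

Definition conv3 (p q r : pt2) : pt2 -> Prop := fun x =>
  exists l1 l2 l3 : R, 0 <= l1 /\ 0 <= l2 /\ 0 <= l3 /\ l1 + l2 + l3 = 1 /\
    x = (l1 * fst p + l2 * fst q + l3 * fst r, l1 * snd p + l2 * snd q + l3 * snd r).

Definition segment (i j : pt2) : pt2 -> Prop := fun x =>
  exists t : R, 0 <= t <= 1 /\
    x = ((1 - t) * fst i + t * fst j, (1 - t) * snd i + t * snd j).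

Definition is_triangle (eps : R) (T : pt2 -> Prop) : Prop :=
  exists p q r : pt2, in_lattice eps p /\ in_lattice eps q /\ in_lattice eps r /\
    dist2 p q = eps /\ dist2 q r = eps /\ dist2 p r = eps /\ set_eq T (conv3 p q r).

(** * Spin fields: SF_eps(Omega).  A spin field is a map on the plane of which only
      the values on lattice points matter. *)
Definition spin_field (eps : R) (Omega : pt2 -> Prop) (u : pt2 -> vec3) : Prop :=
  forall x, in_lattice eps x -> on_sphere (u x) /\ (~ Omega x -> u x = nvec).

Definition in_N (eps : R) (u : pt2 -> vec3) (i j : pt2) : Prop :=
  in_lattice eps i /\ in_lattice eps j /\ dist2 i j = eps /\ u i = opp3 (u j).

Definition neighbours (eps : R) (u : pt2 -> vec3) (T1 T2 : pt2 -> Prop) : Prop :=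
  is_triangle eps T1 /\ is_triangle eps T2 /\
  exists i j, in_N eps u i j /\ set_eq (fun x => T1 x /\ T2 x) (segment i j).

Definition connected_tri (eps : R) (u : pt2 -> vec3) : relation (pt2 -> Prop) :=
  clos_trans _ (neighbours eps u).

Definition pc_union (eps : R) (u : pt2 -> vec3) (Rset : pt2 -> Prop) : Prop :=
  exists F : (pt2 -> Prop) -> Prop,
    (forall T, F T -> is_triangle eps T) /\
    (forall T1 T2, F T1 -> F T2 -> T1 <> T2 -> connected_tri eps u T1 T2) /\
    set_eq Rset (fun x => exists T, F T /\ T x).

Definition is_region (eps : R) (u : pt2 -> vec3) (Rset : pt2 -> Prop) : Prop :=
  pc_union eps u Rset /\
  forall R', pc_union eps u R' -> subset2 Rset R' -> subset2 R' Rset.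

Definition values (eps : R) (u : pt2 -> vec3) (Rset : pt2 -> Prop) : vec3 -> Prop :=
  fun w => exists x, in_lattice eps x /\ Rset x /\ w = u x.

Definition comb (l : list (R * vec3)) : vec3 :=
  fold_right (fun p acc => add3 (scal3 (fst p) (snd p)) acc) zero3 l.
Definition coef_sum (l : list (R * vec3)) : R :=
  fold_right (fun p acc => fst p + acc) 0 l.
Definition admissible_list (W : vec3 -> Prop) (l : list (R * vec3)) : Prop :=
  Forall (fun p => 0 <= fst p /\ W (snd p)) l.

Definition cone (eps : R) (u : pt2 -> vec3) (Rset : pt2 -> Prop) : vec3 -> Prop :=
  fun v => exists l, admissible_list (values eps u Rset) l /\ v = comb l.

Definition is_subspace (C : vec3 -> Prop) : Prop :=
  C zero3 /\ (forall v w, C v -> C w -> C (add3 v w)) /\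
  (forall a v, C v -> C (scal3 a v)).

Definition admissible_surface (eps : R) (u : pt2 -> vec3) (Rset : pt2 -> Prop)
    (S : vec3 -> Prop) : Prop :=
  (~ is_subspace (cone eps u Rset) /\
   forall z, S z <-> exists l v, admissible_list (values eps u Rset) l /\
       coef_sum l > 0 /\ v = comb l /\ v <> zero3 /\ z = scal3 (/ norm3 v) v)
  \/
  (is_subspace (cone eps u Rset) /\
   exists h, on_sphere h /\ (forall c, cone eps u Rset c -> dot3 h c = 0) /\
   forall z, S z <-> exists l tau v, admissible_list (values eps u Rset) l /\
       0 <= tau /\ coef_sum l + tau > 0 /\ v = add3 (comb l) (scal3 tau h) /\
       v <> zero3 /\ z = scal3 (/ norm3 v) v).

Definition bounded2 (Omega : pt2 -> Prop) : Prop :=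
  exists M, forall x, Omega x -> dist2 x (0, 0) <= M.
Definition open2 (Omega : pt2 -> Prop) : Prop :=
  forall x, Omega x -> exists r, r > 0 /\ forall y, dist2 x y < r -> Omega y.

From Stdlib Require Import Reals Lra Lia List Classical Relations ZArith Wf_nat.
From mathcomp Require all_boot all_order all_algebra all_classical all_reals all_analysis.
From mathcomp Require Rstruct Rstruct_topology.
Open Scope R_scope.

(* The values of u on a region R are finitely many: a neighbour edge [i,j] carries
   u(i) = -u(j), so one of its ends lies in Omega; hence every triangle of a chain of at
   least two triangles meets the bounded set Omega, and R is bounded.  Thus cone_R(u) is
   finitely generated.  Call a unit vector of S_R(u) whose products with all of S_R(u) are
   nonnegative a pole.  If the cone is a linear subspace, the orthogonal vector h is a pole.
   Otherwise the cone contains p <> 0 with p.w >= 0 for all generators w, and p/|p| is a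
   pole.  Such a p is the point of minimal norm in the convex hull of the generators when
   that point is nonzero; when it is zero, some generator a has -a in the cone, and one
   recurses on the components orthogonal to a of the other generators. *)

Lemma vec3_eq (a b c d e f : R) : a = d -> b = e -> c = f -> (a, b, c) = (d, e, f).
Proof. intros -> -> ->; reflexivity. Qed.

(* Only variables occurring in the goal are destructed: a section variable survives its
   own [destruct], and would otherwise make the [repeat] loop. *)
Ltac vec3_expand :=
  repeat match goal with
  | v : vec3 |- _ => match goal with |- context [v] =>
      let x := fresh "x" in let y := fresh "y" in let z := fresh "z" in
      destruct v as [[x y] z] end
  end; unfold dot3, add3, scal3, opp3, zero3, nvec in *; simpl in *.

Ltac vec3_ring := vec3_expand; try apply vec3_eq; ring.

Lemma dot3_self_nonneg v : 0 <= dot3 v v.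
Proof. vec3_expand; nra. Qed.

Lemma dot3_self_pos v : v <> zero3 -> 0 < dot3 v v.
Proof.
  intros Hv. destruct (Rlt_dec 0 (dot3 v v)) as [|Hle]; auto.
  exfalso; apply Hv. vec3_expand. apply vec3_eq; nra.
Qed.

Lemma norm3_pos v : v <> zero3 -> 0 < norm3 v.
Proof. intros Hv; apply sqrt_lt_R0, dot3_self_pos, Hv. Qed.

Lemma dot3_scal3 a b v w : dot3 (scal3 a v) (scal3 b w) = a * b * dot3 v w.
Proof. vec3_ring. Qed.

Lemma normalize_on_sphere v : v <> zero3 -> on_sphere (scal3 (/ norm3 v) v).
Proof.
  intros Hv. pose proof (dot3_self_pos v Hv) as Hpos.
  unfold on_sphere, norm3 at 1. rewrite dot3_scal3, <- Rinv_mult.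
  unfold norm3; rewrite sqrt_sqrt by lra.
  rewrite Rinv_l by lra. apply sqrt_1.
Qed.

Lemma on_sphere_dot3_self h : on_sphere h -> dot3 h h = 1.
Proof.
  unfold on_sphere, norm3. intros Hh.
  rewrite <- (sqrt_sqrt (dot3 h h)), Hh by apply dot3_self_nonneg. ring.
Qed.

(* [cone eps u Rset] unfolds to [conic_hull (values eps u Rset)]. *)
Definition conic_hull (V : vec3 -> Prop) (v : vec3) : Prop :=
  exists l, admissible_list V l /\ v = comb l.

Lemma conic_hull_ind (V P : vec3 -> Prop) :
  P zero3 -> (forall a w v, 0 <= a -> V w -> P v -> P (add3 (scal3 a w) v)) ->
  forall v, conic_hull V v -> P v.
Proof.
  intros H0 HS v [l [Hl ->]].
  induction Hl as [|[a w] l [Ha Hw] _ IH]; simpl; auto.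
Qed.

Lemma conic_hull_zero V : conic_hull V zero3.
Proof. exists nil; split; [constructor | reflexivity]. Qed.

Lemma comb_app l1 l2 : comb (l1 ++ l2) = add3 (comb l1) (comb l2).
Proof.
  induction l1 as [|[a w] l1 IH]; simpl; rewrite ?IH;
    generalize (comb l2); [|generalize (comb l1)]; intros; vec3_ring.
Qed.

Lemma conic_hull_add V v w : conic_hull V v -> conic_hull V w -> conic_hull V (add3 v w).
Proof.
  intros [l1 [H1 ->]] [l2 [H2 ->]].
  exists (l1 ++ l2); split; [apply Forall_app; auto | symmetry; apply comb_app].
Qed.

Lemma conic_hull_scal V c v : 0 <= c -> conic_hull V v -> conic_hull V (scal3 c v).
Proof.
  intros Hc [l [Hl ->]]. exists (map (fun p => (c * fst p, snd p)) l). split.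
  - apply Forall_map. eapply Forall_impl; [|exact Hl].
    intros [a w] [Ha Hw]; simpl; split; [apply Rmult_le_pos|]; auto.
  - induction l as [|[a w] l IH]; simpl; [vec3_ring|].
    inversion Hl; subst. rewrite <- IH by auto. generalize (comb l); intros; vec3_ring.
Qed.

Lemma conic_hull_gen (V : vec3 -> Prop) w : V w -> conic_hull V w.
Proof.
  intros Hw. exists ((1, w) :: nil); split.
  - constructor; [simpl; split; [lra | exact Hw] | constructor].
  - vec3_ring.
Qed.

Lemma conic_hull_trans (V V' : vec3 -> Prop) :
  (forall w, V w -> conic_hull V' w) -> forall v, conic_hull V v -> conic_hull V' v.
Proof.
  intros HV. apply conic_hull_ind; [apply conic_hull_zero|].
  intros a w v Ha Hw Hv. apply conic_hull_add; auto. apply conic_hull_scal; auto.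
Qed.

Lemma conic_hull_equiv (V V' : vec3 -> Prop) :
  (forall w, V w -> conic_hull V' w) -> (forall w, V' w -> conic_hull V w) ->
  forall v, conic_hull V v <-> conic_hull V' v.
Proof. intros H H' v; split; apply conic_hull_trans; auto. Qed.

Lemma conic_hull_dot3_nonneg (V : vec3 -> Prop) p :
  (forall w, V w -> 0 <= dot3 p w) -> forall v, conic_hull V v -> 0 <= dot3 p v.
Proof.
  intros HV. apply conic_hull_ind; [vec3_expand; lra|].
  intros a w v Ha Hw Hv. specialize (HV w Hw).
  replace (dot3 p (add3 (scal3 a w) v)) with (a * dot3 p w + dot3 p v) by vec3_ring.
  nra.
Qed.

Lemma conic_hull_dot3_eq0 (V : vec3 -> Prop) p :
  (forall w, V w -> dot3 p w = 0) -> forall v, conic_hull V v -> dot3 p v = 0.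
Proof.
  intros HV. apply conic_hull_ind; [vec3_ring|].
  intros a w v Ha Hw Hv. specialize (HV w Hw).
  replace (dot3 p (add3 (scal3 a w) v)) with (a * dot3 p w + dot3 p v) by vec3_ring.
  rewrite HV, Hv; ring.
Qed.

Lemma conic_hull_subspace (V : vec3 -> Prop) :
  (forall w, V w -> conic_hull V (opp3 w)) -> is_subspace (conic_hull V).
Proof.
  intros Hopp.
  assert (HN : forall v, conic_hull V v -> conic_hull V (opp3 v)).
  { apply conic_hull_ind; [replace (opp3 zero3) with zero3 by vec3_ring; apply conic_hull_zero|].
    intros a w v Ha Hw Hv.
    replace (opp3 (add3 (scal3 a w) v)) with (add3 (scal3 a (opp3 w)) (opp3 v)) by vec3_ring.
    apply conic_hull_add; auto. apply conic_hull_scal; auto. }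
  split; [apply conic_hull_zero | split; [apply conic_hull_add|]].
  intros a v Hv. destruct (Rle_dec 0 a); [apply conic_hull_scal; auto|].
  replace (scal3 a v) with (scal3 (- a) (opp3 v)) by vec3_ring.
  apply conic_hull_scal; [lra | auto].
Qed.

Lemma coef_sum_pos (V : vec3 -> Prop) l :
  admissible_list V l -> comb l <> zero3 -> coef_sum l > 0.
Proof.
  intros Hl Hc.
  assert (H : 0 <= coef_sum l /\ (coef_sum l = 0 -> comb l = zero3)).
  { clear Hc. induction Hl as [|[a w] l [Ha _] _ [IH1 IH2]]; simpl in *; [split; auto; lra|].
    split; [lra|]. intros E. rewrite IH2 by lra. replace a with 0 by lra.
    generalize (comb l); intros; vec3_ring. }
  destruct H as [H1 H2]. destruct (Rle_lt_or_eq_dec 0 (coef_sum l) H1); auto.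
  exfalso; auto.
Qed.
Fixpoint lcomb (lam : nat -> R) (W : list vec3) : vec3 :=
  match W with
  | nil => zero3
  | w :: W' => add3 (scal3 (lam O) w) (lcomb (fun k => lam (S k)) W')
  end.

Fixpoint wsum (lam : nat -> R) (n : nat) : R :=
  match n with O => 0 | S n' => lam O + wsum (fun k => lam (S k)) n' end.

Definition simplex (n : nat) (lam : nat -> R) : Prop :=
  (forall k, 0 <= lam k) /\ wsum lam n = 1.

Definition unit_weight (j : nat) : nat -> R := fun k => if Nat.eqb k j then 1 else 0.

Lemma unit_weight_nonneg j k : 0 <= unit_weight j k.
Proof. unfold unit_weight; destruct (Nat.eqb k j); lra. Qed.

Lemma lcomb_ext W : forall lam mu,
  (forall k, (k < length W)%nat -> lam k = mu k) -> lcomb lam W = lcomb mu W.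
Proof.
  induction W as [|w W IH]; intros lam mu H; simpl; auto.
  rewrite (H O), (IH (fun k => lam (S k)) (fun k => mu (S k))); simpl; auto; try lia.
  intros k Hk; apply H; simpl; lia.
Qed.

Lemma wsum_ext n : forall lam mu,
  (forall k, (k < n)%nat -> lam k = mu k) -> wsum lam n = wsum mu n.
Proof.
  induction n as [|n IH]; intros lam mu H; simpl; auto.
  rewrite (H O), (IH (fun k => lam (S k)) (fun k => mu (S k))); auto; try lia.
  intros k Hk; apply H; lia.
Qed.

Lemma lcomb_lin W : forall a b lam mu,
  lcomb (fun k => a * lam k + b * mu k) W = add3 (scal3 a (lcomb lam W)) (scal3 b (lcomb mu W)).
Proof.
  induction W as [|w W IH]; intros a b lam mu; simpl; [vec3_ring|].
  rewrite (IH a b (fun k => lam (S k)) (fun k => mu (S k))).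
  generalize (lcomb (fun k => lam (S k)) W) (lcomb (fun k => mu (S k)) W); intros; vec3_ring.
Qed.

Lemma wsum_lin n : forall a b lam mu,
  wsum (fun k => a * lam k + b * mu k) n = a * wsum lam n + b * wsum mu n.
Proof.
  induction n as [|n IH]; intros a b lam mu; simpl; [ring|].
  rewrite (IH a b (fun k => lam (S k)) (fun k => mu (S k))); ring.
Qed.

Lemma lcomb_zero W : forall lam, (forall k, lam k = 0) -> lcomb lam W = zero3.
Proof.
  induction W as [|w W IH]; intros lam H; simpl; auto.
  rewrite IH, H by auto. vec3_ring.
Qed.

Lemma wsum_zero n : forall lam, (forall k, lam k = 0) -> wsum lam n = 0.
Proof.
  induction n as [|n IH]; intros lam H; simpl; auto.
  rewrite IH, H by auto; ring.
Qed.

Lemma lcomb_unit W : forall j, (j < length W)%nat -> lcomb (unit_weight j) W = nth j W zero3.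
Proof.
  induction W as [|w W IH]; intros [|j] Hj; simpl in *; try lia.
  - rewrite lcomb_zero by (intros; reflexivity). unfold unit_weight; simpl; vec3_ring.
  - change (lcomb (fun k => unit_weight (S j) (S k)) W) with (lcomb (unit_weight j) W).
    rewrite IH by lia. unfold unit_weight; simpl.
    generalize (nth j W zero3); intros; vec3_ring.
Qed.

Lemma wsum_unit n : forall j, (j < n)%nat -> wsum (unit_weight j) n = 1.
Proof.
  induction n as [|n IH]; intros [|j] Hj; simpl in *; try lia.
  - rewrite wsum_zero by (intros; reflexivity). unfold unit_weight; simpl; ring.
  - change (wsum (fun k => unit_weight (S j) (S k)) n) with (wsum (unit_weight j) n).
    rewrite IH by lia. unfold unit_weight; simpl; ring.
Qed.

Lemma wsum_nonneg n : forall lam, (forall k, 0 <= lam k) -> 0 <= wsum lam n.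
Proof.
  induction n as [|n IH]; intros lam H; simpl; [lra|].
  pose proof (H O); pose proof (IH (fun k => lam (S k)) (fun k => H (S k))); lra.
Qed.

Lemma wsum_ge_term n : forall lam, (forall k, 0 <= lam k) ->
  forall k, (k < n)%nat -> lam k <= wsum lam n.
Proof.
  induction n as [|n IH]; intros lam H k Hk; simpl; [lia|].
  pose proof (wsum_nonneg n (fun k => lam (S k)) (fun k => H (S k))).
  destruct k as [|k]; [lra|].
  pose proof (IH (fun k => lam (S k)) (fun k => H (S k)) k ltac:(lia)).
  pose proof (H O); lra.
Qed.

Lemma wsum_pos_term n : forall lam, wsum lam n > 0 -> exists k, (k < n)%nat /\ lam k > 0.
Proof.
  induction n as [|n IH]; intros lam H; simpl in *; [lra|].
  destruct (Rlt_dec 0 (lam O)); [exists O; split; [lia | lra]|].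
  destruct (IH (fun k => lam (S k))) as [k [Hk Hpos]]; [lra|].
  exists (S k); split; [lia | auto].
Qed.

Lemma lcomb_conic_hull W : forall lam,
  (forall k, 0 <= lam k) -> conic_hull (fun x => In x W) (lcomb lam W).
Proof.
  induction W as [|w W IH]; intros lam H; simpl; [apply conic_hull_zero|].
  apply conic_hull_add.
  - apply conic_hull_scal, conic_hull_gen; simpl; auto.
  - apply (conic_hull_trans (fun x => In x W)); [|apply IH; auto].
    intros x Hx; apply conic_hull_gen; simpl; auto.
Qed.

Definition in_hull (W : list vec3) (p : vec3) : Prop :=
  exists lam, simplex (length W) lam /\ p = lcomb lam W.

Lemma in_hull_convex W p q t : in_hull W p -> in_hull W q -> 0 <= t <= 1 ->
  in_hull W (add3 (scal3 (1 - t) p) (scal3 t q)).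
Proof.
  intros [lam [[Hl Hsl] ->]] [mu [[Hm Hsm] ->]] Ht.
  exists (fun k => (1 - t) * lam k + t * mu k). split; [split|].
  - intros k; pose proof (Hl k); pose proof (Hm k); nra.
  - rewrite wsum_lin, Hsl, Hsm; ring.
  - symmetry; apply lcomb_lin.
Qed.

Lemma in_hull_gen W w : In w W -> in_hull W w.
Proof.
  intros Hw. destruct (In_nth W w zero3 Hw) as [j [Hj <-]].
  exists (unit_weight j); split; [split|].
  - apply unit_weight_nonneg.
  - apply wsum_unit, Hj.
  - symmetry; apply lcomb_unit, Hj.
Qed.

Lemma in_hull_conic_hull W p : in_hull W p -> conic_hull (fun x => In x W) p.
Proof. intros [lam [[Hl _] ->]]. apply lcomb_conic_hull, Hl. Qed.

(* From [0 = sum_k lam_k w_k] with [lam_j > 0]: [- lam_j w_j = sum_(k <> j) lam_k w_k]. *)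
Lemma zero_in_hull_opp W : in_hull W zero3 ->
  exists w, In w W /\ conic_hull (fun x => In x W) (opp3 w).
Proof.
  intros [lam [[Hl Hs] H0]].
  destruct (wsum_pos_term (length W) lam) as [j [Hj Hlj]]; [lra|].
  exists (nth j W zero3); split; [apply nth_In, Hj|].
  set (mu := fun k => 1 * lam k + (- lam j) * unit_weight j k).
  assert (Hmu : forall k, 0 <= mu k).
  { intros k. unfold mu, unit_weight. destruct (Nat.eqb_spec k j); [subst; lra|].
    pose proof (Hl k); lra. }
  replace (opp3 (nth j W zero3)) with (scal3 (/ lam j) (lcomb mu W)).
  - apply conic_hull_scal; [left; apply Rinv_0_lt_compat; lra|].
    apply lcomb_conic_hull, Hmu.
  - unfold mu. rewrite lcomb_lin, lcomb_unit, <- H0 by exact Hj.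
    generalize (nth j W zero3); intros; vec3_expand; apply vec3_eq; field; lra.
Qed.

Section MinimalNormPoint.
Import all_boot all_order all_algebra all_classical all_reals all_analysis.
Import Rstruct Rstruct_topology.
Import Order.TTheory GRing.Theory Num.Theory numFieldNormedType.Exports.
Local Open Scope classical_set_scope.
Local Open Scope ring_scope.

Let continuous_addR N (f g : 'rV[R]_N -> R) :
  continuous f -> continuous g -> continuous (fun v => f v + g v).
Proof. by move=> cf cg x; exact: (@continuousD R R^o _ f g x (cf x) (cg x)). Qed.

Let continuous_mulR N (f g : 'rV[R]_N -> R) :
  continuous f -> continuous g -> continuous (fun v => f v * g v).
Proof. by move=> cf cg x; exact: (@continuousM R _ f g x (cf x) (cg x)). Qed.

Lemma lcomb_linear_continuous (N : nat) (phi : vec3 -> R) :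
  (forall a b, phi (add3 a b) = phi a + phi b) ->
  (forall s a, phi (scal3 s a) = s * phi a) -> phi zero3 = 0 ->
  forall W (g : nat -> 'I_N),
  continuous (fun v : 'rV[R]_N => phi (lcomb (fun k => v ord0 (g k)) W)).
Proof.
move=> phiD phiZ phi0; elim=> [|w W IH] g /=.
  by rewrite phi0; apply: cst_continuous.
have -> : (fun v : 'rV[R]_N => phi (add3 (scal3 (v ord0 (g 0%N)) w)
                                   (lcomb (fun k => v ord0 (g k.+1)) W))) =
          (fun v => v ord0 (g 0%N) * phi w + phi (lcomb (fun k => v ord0 (g k.+1)) W)).
  by apply: funext => v; rewrite phiD phiZ.
apply: continuous_addR; last exact: IH.
by apply: continuous_mulR; [exact: coord_continuous | exact: cst_continuous].
Qed.

Lemma wsum_continuous (N : nat) n (g : nat -> 'I_N) :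
  continuous (fun v : 'rV[R]_N => wsum (fun k => v ord0 (g k)) n).
Proof.
elim: n g => [|n IH] g /=; first exact: cst_continuous.
by apply: continuous_addR; [exact: coord_continuous | exact: IH].
Qed.

Lemma sqnorm_lcomb_continuous (N : nat) W (g : nat -> 'I_N) :
  continuous (fun v : 'rV[R]_N =>
    dot3 (lcomb (fun k => v ord0 (g k)) W) (lcomb (fun k => v ord0 (g k)) W)).
Proof.
pose c1 (x : vec3) := x.1.1; pose c2 (x : vec3) := x.1.2; pose c3 (x : vec3) := x.2.
have coordC phi : (forall a b, phi (add3 a b) = phi a + phi b) ->
    (forall s a, phi (scal3 s a) = s * phi a) -> phi zero3 = 0 ->
    continuous (fun v : 'rV[R]_N =>
      phi (lcomb (fun k => v ord0 (g k)) W) * phi (lcomb (fun k => v ord0 (g k)) W)).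
  by move=> phiD phiZ phi0; apply: continuous_mulR; apply: lcomb_linear_continuous.
have dot3E (x : vec3) : dot3 x x = c1 x * c1 x + c2 x * c2 x + c3 x * c3 x.
  by case: x => [[? ?] ?].
under eq_fun do rewrite dot3E.
by apply: continuous_addR; first apply: continuous_addR;
  apply: coordC => [[[? ?] ?] [[? ?] ?]|? [[? ?] ?]|].
Qed.

Lemma in_hull_min_norm W : W <> nil ->
  exists p, in_hull W p /\ forall q, in_hull W q -> Rle (dot3 p p) (dot3 q q).
Proof.
case: W => [//|w0 W] _; set m := length W.
pose coef (v : 'rV[R]_m.+1) k := v ord0 (inord k).
have coefE (mu : nat -> R) k : (k < m.+1)%coq_nat -> coef (\row_i mu i) k = mu k.
  by move=> /ssrnat.ltP k_lt; rewrite /coef mxE inordK.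
pose A := [set v : 'rV[R]_m.+1 |
  (forall i, 0 <= v ord0 i <= 1) /\ wsum (coef v) m.+1 = 1].
pose f v := dot3 (lcomb (coef v) (w0 :: W)) (lcomb (coef v) (w0 :: W)).
have cA : compact A.
  pose B := [set v : 'rV[R]_m.+1 | forall i, `[(0:R), 1]%classic (v ord0 i)].
  have cB : compact B.
    by apply: (@rV_compact _ m.+1 (fun _ => `[(0:R), 1]%classic)) => _;
      exact: segment_compact.
  have -> : A = B `&` ((fun v => wsum (coef v) m.+1) @^-1` [set 1]).
    apply/seteqP; split => v /=.
      by move=> [H1 H2]; split => // i; rewrite /= in_itv /=; apply: H1.
    by move=> [H1 H2]; split => // i; have := H1 i; rewrite /= in_itv.
  apply: (subclosed_compact _ cB); last by move=> v [].
  apply: closedI; first exact: (compact_closed (@norm_hausdorff _ _) cB).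
  by move: (@wsum_continuous m.+1 m.+1 (@inord m)) => /continuous_closedP; apply;
    exact: closed_eq.
have inA mu : simplex m.+1 mu -> A (\row_i mu i).
  move=> [mu_ge0 mu_sum]; split.
    move=> i; rewrite mxE; apply/andP; split; apply/RleP; first exact: mu_ge0.
    have -> : 1 = wsum mu m.+1 by rewrite mu_sum.
    by apply: wsum_ge_term => //; apply/ssrnat.ltP; exact: ltn_ord.
  by rewrite (wsum_ext _ _ mu) // => k /coefE.
have A0 : A !=set0.
  exists (\row_i unit_weight 0 i); apply: inA; split; first exact: unit_weight_nonneg.
  by apply: wsum_unit; apply/ssrnat.ltP.
have cf : {within A, continuous f}.
  by apply: continuous_subspaceT => x; exact: sqnorm_lcomb_continuous.
have [c /set_mem [c_01 c_sum] c_min] := compact_EVT_min A0 cA cf.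
exists (lcomb (coef c) (w0 :: W)); split.
  exists (coef c); split => //; split => // k.
  by have /andP[/RleP] := c_01 (inord k).
move=> _ [mu [mu_simplex ->]].
have /RleP := c_min _ (mem_set (inA _ mu_simplex)).
by rewrite /f (lcomb_ext _ (coef (\row_i mu i)) mu) // => k /coefE.
Qed.

End MinimalNormPoint.

Lemma quadratic_perturbation_nonneg A B :
  0 <= B -> (forall t, 0 < t <= 1 -> 0 <= 2 * t * A + t * t * B) -> 0 <= A.
Proof.
  intros HB H. destruct (Rle_or_lt 0 A) as [|HA]; auto. exfalso.
  set (t := - A / (B - A)).
  assert (Et : t * (B - A) = - A) by (unfold t; field; lra).
  assert (Ht : 0 < t <= 1) by (split; nra).
  specialize (H t Ht). nra.
Qed.

Lemma min_norm_variational (C : vec3 -> Prop) p w :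
  (forall t, 0 <= t <= 1 -> C (add3 (scal3 (1 - t) p) (scal3 t w))) ->
  (forall q, C q -> dot3 p p <= dot3 q q) -> dot3 p p <= dot3 p w.
Proof.
  intros Hseg Hmin.
  enough (0 <= dot3 p w - dot3 p p) by lra.
  apply (quadratic_perturbation_nonneg _ (dot3 (add3 w (opp3 p)) (add3 w (opp3 p)))).
  - apply dot3_self_nonneg.
  - intros t Ht. specialize (Hmin _ (Hseg t ltac:(lra))).
    revert Hmin; vec3_expand; intros; nra.
Qed.

Lemma min_norm_dichotomy W : W <> nil ->
  (exists p, conic_hull (fun x => In x W) p /\ p <> zero3 /\
     forall w, In w W -> 0 <= dot3 p w) \/
  (exists w, In w W /\ conic_hull (fun x => In x W) (opp3 w)).
Proof.
  intros HW. destruct (in_hull_min_norm W HW) as [p [Hp Hmin]].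
  destruct (classic (p = zero3)) as [->|Hp0]; [right; apply zero_in_hull_opp, Hp|].
  left; exists p; split; [apply in_hull_conic_hull, Hp | split; [exact Hp0|]].
  intros w Hw. pose proof (dot3_self_nonneg p).
  enough (dot3 p p <= dot3 p w) by lra.
  apply (min_norm_variational (in_hull W)); auto.
  intros t Ht; apply in_hull_convex; auto using in_hull_gen.
Qed.

Definition reject (a v : vec3) : vec3 := add3 v (scal3 (- (dot3 v a / dot3 a a)) a).

Lemma dot3_reject a v : a <> zero3 -> dot3 (reject a v) a = 0.
Proof.
  intros Ha. pose proof (dot3_self_pos a Ha). unfold reject.
  transitivity (dot3 v a - dot3 v a / dot3 a a * dot3 a a).
  - generalize (dot3 v a / dot3 a a); intros; vec3_ring.
  - field; lra.
Qed.

Lemma reject_decomp a v : v = add3 (reject a v) (scal3 (dot3 v a / dot3 a a) a).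
Proof. unfold reject; generalize (dot3 v a / dot3 a a); intros; vec3_ring. Qed.

Lemma In_app_cons_iff (A : Type) (x a : A) l1 l2 :
  In x (l1 ++ a :: l2) <-> x = a \/ In x (l1 ++ l2).
Proof. rewrite !in_app_iff; simpl; intuition. Qed.

Section RejectStep.
Variables (W1 W2 : list vec3) (a : vec3).
Hypothesis opp_a_in_hull : conic_hull (fun x => In x (W1 ++ a :: W2)) (opp3 a).

Local Notation hull := (conic_hull (fun x => In x (W1 ++ a :: W2))).
Local Notation hull' := (conic_hull (fun x => In x (map (reject a) (W1 ++ W2)))).

Lemma line_in_hull c : hull (scal3 c a).
Proof.
  destruct (Rle_dec 0 c).
  - apply conic_hull_scal, conic_hull_gen; [assumption | apply in_elt].
  - replace (scal3 c a) with (scal3 (- c) (opp3 a)) by vec3_ring.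
    apply conic_hull_scal; [lra | exact opp_a_in_hull].
Qed.

Lemma reject_hull_sub v : hull' v -> hull v.
Proof.
  apply conic_hull_trans. intros x Hx. apply in_map_iff in Hx as [w [<- Hw]].
  unfold reject. apply conic_hull_add; [|apply line_in_hull].
  apply conic_hull_gen, In_app_cons_iff; auto.
Qed.

Lemma reject_lineality :
  (forall x, In x (map (reject a) (W1 ++ W2)) -> hull' (opp3 x)) ->
  forall w, In w (W1 ++ a :: W2) -> hull (opp3 w).
Proof.
  intros Hopp w Hw. apply In_app_cons_iff in Hw as [->|Hw]; [exact opp_a_in_hull|].
  rewrite (reject_decomp a w).
  replace (opp3 (add3 (reject a w) (scal3 (dot3 w a / dot3 a a) a)))
    with (add3 (opp3 (reject a w)) (scal3 (- (dot3 w a / dot3 a a)) a))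
    by (generalize (reject a w); intros; vec3_ring).
  apply conic_hull_add; [|apply line_in_hull].
  apply reject_hull_sub, Hopp, in_map, Hw.
Qed.

End RejectStep.

Lemma reject_dual a U p : a <> zero3 ->
  conic_hull (fun x => In x (map (reject a) U)) p ->
  (forall x, In x (map (reject a) U) -> 0 <= dot3 p x) ->
  forall w, w = a \/ In w U -> 0 <= dot3 p w.
Proof.
  intros Ha Hp Hdual.
  assert (Hpa : dot3 p a = 0).
  { apply (conic_hull_dot3_eq0 _ a) in Hp.
    - revert Hp; vec3_expand; intros; lra.
    - intros x Hx. apply in_map_iff in Hx as [w [<- _]].
      rewrite <- (dot3_reject a w Ha). vec3_ring. }
  intros w [->|Hw]; [lra|].
  specialize (Hdual _ (in_map (reject a) _ _ Hw)).
  rewrite (reject_decomp a w).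
  replace (dot3 p (add3 (reject a w) (scal3 (dot3 w a / dot3 a a) a)))
    with (dot3 p (reject a w) + dot3 w a / dot3 a a * dot3 p a)
    by (generalize (reject a w); intros; vec3_ring).
  rewrite Hpa; lra.
Qed.

Lemma conic_hull_drop_zero W1 W2 v :
  conic_hull (fun x => In x (W1 ++ zero3 :: W2)) v <-> conic_hull (fun x => In x (W1 ++ W2)) v.
Proof.
  apply conic_hull_equiv; intros w Hw.
  - apply In_app_cons_iff in Hw as [->|Hw]; [apply conic_hull_zero | apply conic_hull_gen, Hw].
  - apply conic_hull_gen, In_app_cons_iff; auto.
Qed.

Lemma cone_dual_vector W :
  (exists w, In w W /\ ~ conic_hull (fun x => In x W) (opp3 w)) ->
  exists p, conic_hull (fun x => In x W) p /\ p <> zero3 /\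
    forall w, In w W -> 0 <= dot3 p w.
Proof.
  induction W as [W IH] using (induction_ltof1 _ (@length vec3)); unfold ltof in IH.
  intros [w0 [Hw0 Hopp0]].
  destruct (classic (In zero3 W)) as [Hz|Hz].
  - apply in_split in Hz as [W1 [W2 ->]].
    assert (Hw0' : In w0 (W1 ++ W2)).
    { apply In_app_cons_iff in Hw0 as [->|]; auto.
      exfalso; apply Hopp0. replace (opp3 zero3) with zero3 by vec3_ring.
      apply conic_hull_zero. }
    destruct (IH (W1 ++ W2)) as [p [Hp [Hp0 Hdual]]].
    + rewrite !length_app; simpl; lia.
    + exists w0; split; [exact Hw0'|]. rewrite <- conic_hull_drop_zero; exact Hopp0.
    + exists p; split; [apply conic_hull_drop_zero, Hp | split; [exact Hp0|]].
      intros w Hw. apply In_app_cons_iff in Hw as [->|Hw]; [vec3_expand; lra | auto].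
  - destruct (min_norm_dichotomy W) as [Hdual | [a [Ha Hopp]]]; auto.
    { intros ->; contradiction. }
    apply in_split in Ha as [W1 [W2 ->]].
    assert (Ha0 : a <> zero3) by (intros ->; apply Hz, in_elt).
    destruct (IH (map (reject a) (W1 ++ W2))) as [p [Hp [Hp0 Hdual]]].
    + rewrite length_map, !length_app; simpl; lia.
    + apply NNPP; intros Hall. apply Hopp0.
      apply (reject_lineality W1 W2 a Hopp); auto.
      intros x Hx; apply NNPP; intros Hnot; apply Hall; eauto.
    + exists p; split; [apply (reject_hull_sub W1 W2 a Hopp), Hp | split; [exact Hp0|]].
      intros w Hw. apply (reject_dual a (W1 ++ W2)); auto. apply In_app_cons_iff, Hw.
Qed.

Lemma finite_cone_dual_vector (V : vec3 -> Prop) W :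
  (forall w, V w <-> In w W) -> ~ is_subspace (conic_hull V) ->
  exists p, conic_hull V p /\ p <> zero3 /\ forall w, V w -> 0 <= dot3 p w.
Proof.
  intros HW Hns.
  assert (Hhull : forall v, conic_hull V v <-> conic_hull (fun x => In x W) v).
  { apply conic_hull_equiv; intros w Hw; apply conic_hull_gen, HW, Hw. }
  destruct (cone_dual_vector W) as [p [Hp [Hp0 Hdual]]].
  - apply NNPP; intros Hall. apply Hns, conic_hull_subspace.
    intros w Hw. apply Hhull. apply NNPP; intros Hnot. apply Hall.
    exists w; split; [apply HW|]; auto.
  - exists p; split; [apply Hhull, Hp | split; [exact Hp0|]].
    intros w Hw; apply Hdual, HW, Hw.
Qed.

Lemma Rabs_coord_le_dist2 x y :
  Rabs (fst x - fst y) <= dist2 x y /\ Rabs (snd x - snd y) <= dist2 x y.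
Proof.
  unfold dist2; split; rewrite <- sqrt_Rsqr_abs; apply sqrt_le_1_alt; unfold Rsqr;
    generalize (fst x - fst y) (snd x - snd y); intros; nra.
Qed.

Lemma Rabs_convex3_sub a b c l1 l2 l3 e :
  0 <= l1 -> 0 <= l2 -> 0 <= l3 -> l1 + l2 + l3 = 1 ->
  Rabs (a - b) <= e -> Rabs (a - c) <= e -> Rabs (l1 * a + l2 * b + l3 * c - a) <= e.
Proof.
  intros H1 H2 H3 Hs Hb Hc.
  replace (l1 * a + l2 * b + l3 * c - a) with (- (l2 * (a - b) + l3 * (a - c))) by
    (replace l1 with (1 - l2 - l3) by lra; ring).
  rewrite Rabs_Ropp. eapply Rle_trans; [apply Rabs_triang|].
  rewrite !Rabs_mult, (Rabs_pos_eq l2), (Rabs_pos_eq l3) by assumption.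
  pose proof (Rabs_pos (a - b)). nra.
Qed.

Lemma triangle_box eps T : is_triangle eps T ->
  exists c, forall x, T x -> Rabs (fst x - fst c) <= eps /\ Rabs (snd x - snd c) <= eps.
Proof.
  intros [p [q [r [_ [_ [_ [Hpq [_ [Hpr HT]]]]]]]]]. exists p.
  intros x Hx. apply HT in Hx as [l1 [l2 [l3 [H1 [H2 [H3 [Hs ->]]]]]]].
  destruct (Rabs_coord_le_dist2 p q) as [Hq1 Hq2].
  destruct (Rabs_coord_le_dist2 p r) as [Hr1 Hr2].
  rewrite Hpq in Hq1, Hq2; rewrite Hpr in Hr1, Hr2.
  simpl; split; apply Rabs_convex3_sub; auto.
Qed.

(* On a neighbour edge [u i = - u j], so [u i] and [u j] cannot both equal [n]. *)
Lemma neighbours_meet_domain eps Omega u T1 T2 :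
  spin_field eps Omega u -> neighbours eps u T1 T2 -> exists y, T1 y /\ Omega y.
Proof.
  intros Hsf [_ [_ [i [j [[Hi [Hj [_ Hu]]] HS]]]]].
  assert (HTi : T1 i).
  { apply (proj2 (HS i)). exists 0. split; [lra|]. destruct i, j; simpl; f_equal; ring. }
  assert (HTj : T1 j).
  { apply (proj2 (HS j)). exists 1. split; [lra|]. destruct i, j; simpl; f_equal; ring. }
  destruct (classic (Omega i)) as [|Hi']; [exists i; auto|].
  destruct (classic (Omega j)) as [|Hj']; [exists j; auto|].
  rewrite (proj2 (Hsf i Hi) Hi'), (proj2 (Hsf j Hj) Hj') in Hu.
  unfold nvec, opp3, scal3 in Hu. injection Hu. lra.
Qed.

Lemma pc_union_bounded eps Omega u Rset : eps > 0 ->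
  bounded2 Omega -> spin_field eps Omega u -> pc_union eps u Rset ->
  exists K, forall x, Rset x -> Rabs (fst x) <= K /\ Rabs (snd x) <= K.
Proof.
  intros Heps [M HM] Hsf [F [Htri [Hconn HR]]].
  destruct (classic (exists T0, F T0)) as [[T0 HT0]|Hempty].
  2:{ exists 0. intros x Hx. apply HR in Hx as [T [HT _]]. exfalso; eauto. }
  destruct (triangle_box eps T0 (Htri T0 HT0)) as [c0 Hc0].
  exists (Rabs (fst c0) + Rabs (snd c0) + Rabs M + 2 * eps).
  intros x Hx. apply HR in Hx as [T [HT Hx]].
  pose proof (Rabs_pos (fst c0)); pose proof (Rabs_pos (snd c0)); pose proof (Rabs_pos M); pose proof (Rle_abs M).
  pose proof (Rabs_triang_inv (fst x) (fst c0)); pose proof (Rabs_triang_inv (snd x) (snd c0)).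
  destruct (classic (T = T0)) as [->|HTne]; [destruct (Hc0 x Hx); split; lra|].
  assert (Hnb : exists T', neighbours eps u T T').
  { destruct (clos_trans_t1n _ _ _ _ (Hconn T T0 HT HT0 HTne)); eauto. }
  destruct Hnb as [T' Hnb].
  destruct (neighbours_meet_domain eps Omega u T T' Hsf Hnb) as [y [Hy HyO]].
  destruct (triangle_box eps T (Htri T HT)) as [c Hc].
  destruct (Hc x Hx) as [Hx1 Hx2]; destruct (Hc y Hy) as [Hy1 Hy2].
  destruct (Rabs_coord_le_dist2 y (0, 0)) as [Hy01 Hy02].
  specialize (HM y HyO); simpl in Hy01, Hy02; rewrite Rminus_0_r in Hy01, Hy02.
  rewrite Rabs_minus_sym in Hy1, Hy2.
  pose proof (Rabs_triang_inv (fst x) (fst c)); pose proof (Rabs_triang_inv (snd x) (snd c)).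
  pose proof (Rabs_triang_inv (fst c) (fst y)); pose proof (Rabs_triang_inv (snd c) (snd y)).
  split; lra.
Qed.

Lemma int_range_finite e M : e > 0 ->
  exists L : list Z, forall a, e * Rabs (IZR a) <= M -> In a L.
Proof.
  intros He. set (N := Z.to_nat (up (M / e))).
  exists (map (fun k => (Z.of_nat k - Z.of_nat N)%Z) (seq 0 (2 * N + 1))).
  intros a Ha. apply in_map_iff. exists (Z.to_nat (a + Z.of_nat N)).
  assert (Hbound : Rabs (IZR a) < IZR (up (M / e))).
  { destruct (archimed (M / e)) as [Hup _]. eapply Rle_lt_trans; [|exact Hup].
    apply (Rmult_le_reg_l e); [exact He|]. unfold Rdiv.
    rewrite <- Rmult_assoc, Rinv_r_simpl_m by lra. exact Ha. }
  pose proof (Rle_abs (IZR a)). pose proof (Rle_abs (- IZR a)).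
  rewrite Rabs_Ropp in *.
  assert (Ha1 : (a < up (M / e))%Z) by (apply lt_IZR; lra).
  assert (Ha2 : (- a < up (M / e))%Z) by (apply lt_IZR; rewrite opp_IZR; lra).
  unfold N. split; [lia | apply in_seq; lia].
Qed.

Lemma lattice_box_finite eps K : eps > 0 -> exists P : list pt2, forall x,
  in_lattice eps x -> Rabs (fst x) <= K -> Rabs (snd x) <= K -> In x P.
Proof.
  intros Heps. destruct (int_range_finite eps (2 * K) Heps) as [L HL].
  exists (map (fun ab => (eps * (IZR (fst ab) * 1 + IZR (snd ab) * (1 / 2)),
                         eps * (IZR (fst ab) * 0 + IZR (snd ab) * (sqrt 3 / 2))))
              (list_prod L L)).
  intros x [a [b ->]] Hx1 Hx2. simpl in Hx1, Hx2.
  apply in_map_iff. exists (a, b); split; [reflexivity|].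
  assert (Hs3 : 1 <= sqrt 3) by (rewrite <- sqrt_1; apply sqrt_le_1_alt; lra).
  generalize (IZR a) (IZR b) Hx1 Hx2 (HL a) (HL b); clear Hx1 Hx2 HL.
  intros A B Hx1 Hx2 HA HB.
  assert (eps * Rabs B <= 2 * K) by (revert Hx2; unfold Rabs; repeat destruct Rcase_abs; nra).
  assert (eps * Rabs A <= 2 * K) by (revert Hx1 H; unfold Rabs; repeat destruct Rcase_abs; nra).
  apply in_prod; auto.
Qed.

Lemma finite_subset_list (A : Type) (P : A -> Prop) (L : list A) :
  (forall x, P x -> In x L) -> exists W, forall x, P x <-> In x W.
Proof.
  revert P. induction L as [|a L IH]; intros P HP.
  - exists nil. intros x; split; [apply HP | intros []].
  - destruct (IH (fun x => P x /\ x <> a)) as [W HW].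
    { intros x [Hx Hne]. destruct (HP x Hx); [congruence | auto]. }
    destruct (classic (P a)) as [Ha|Ha]; [exists (a :: W) | exists W]; intros x;
      simpl; rewrite <- HW; destruct (classic (x = a)) as [->|Hne]; firstorder congruence.
Qed.

Lemma values_finite eps Omega u Rset : eps > 0 -> bounded2 Omega ->
  spin_field eps Omega u -> is_region eps u Rset ->
  exists W, forall w, values eps u Rset w <-> In w W.
Proof.
  intros Heps Hbnd Hsf [Hpc _].
  destruct (pc_union_bounded eps Omega u Rset Heps Hbnd Hsf Hpc) as [K HK].
  destruct (lattice_box_finite eps K Heps) as [P HP].
  apply (finite_subset_list _ _ (map u P)).
  intros w [x [Hx [HR ->]]]. apply in_map. destruct (HK x HR). apply HP; auto.
Qed.

Lemma pole_of_dual_vector (V S : vec3 -> Prop) p :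
  conic_hull V p -> p <> zero3 -> (forall w, V w -> 0 <= dot3 p w) ->
  (forall z, S z <-> exists l v, admissible_list V l /\ coef_sum l > 0 /\ v = comb l /\
                               v <> zero3 /\ z = scal3 (/ norm3 v) v) ->
  exists uR, on_sphere uR /\ S uR /\ forall z, S z -> dot3 uR z >= 0.
Proof.
  intros Hp Hp0 Hdual HS. exists (scal3 (/ norm3 p) p).
  split; [apply normalize_on_sphere, Hp0 | split].
  - destruct Hp as [l [Hl Hpl]]. apply HS. exists l, p.
    split; [exact Hl | split; [apply (coef_sum_pos V); congruence | auto]].
  - intros z Hz. apply HS in Hz as [l [v [Hl [_ [-> [Hv ->]]]]]].
    rewrite dot3_scal3. apply Rle_ge, Rmult_le_pos.
    + pose proof (norm3_pos p Hp0); pose proof (norm3_pos _ Hv).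
      apply Rmult_le_pos; left; apply Rinv_0_lt_compat; assumption.
    + apply (conic_hull_dot3_nonneg V); [exact Hdual | exists l; auto].
Qed.

Lemma pole_of_orthogonal_vector (V S : vec3 -> Prop) h :
  on_sphere h -> (forall c, conic_hull V c -> dot3 h c = 0) ->
  (forall z, S z <-> exists l tau v, admissible_list V l /\ 0 <= tau /\
       coef_sum l + tau > 0 /\ v = add3 (comb l) (scal3 tau h) /\
       v <> zero3 /\ z = scal3 (/ norm3 v) v) ->
  exists uR, on_sphere uR /\ S uR /\ forall z, S z -> dot3 uR z >= 0.
Proof.
  intros Hh Horth HS. pose proof (on_sphere_dot3_self h Hh) as Hhh.
  exists h; split; [exact Hh | split].
  - apply HS. exists nil, 1, h. split; [constructor|]. simpl; split; [lra | split; [lra|]].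
    split; [vec3_ring|]. split; [intros ->; vec3_expand; lra|].
    unfold on_sphere in Hh; rewrite Hh, Rinv_1; vec3_ring.
  - intros z Hz. apply HS in Hz as [l [tau [v [Hl [Htau [_ [-> [Hv ->]]]]]]]].
    assert (Hl0 : dot3 h (comb l) = 0) by (apply Horth; exists l; auto).
    pose proof (norm3_pos _ Hv) as Hn.
    replace (dot3 h _) with (/ norm3 (add3 (comb l) (scal3 tau h)) * (dot3 h (comb l) + tau * dot3 h h))
      by (generalize (/ norm3 (add3 (comb l) (scal3 tau h))) (comb l); intros; vec3_ring).
    rewrite Hl0, Hhh. apply Rle_ge, Rmult_le_pos; [left; apply Rinv_0_lt_compat|]; lra.
Qed.

Theorem lemmaB1 (eps : R) (Omega : pt2 -> Prop) (u : pt2 -> vec3)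
  (Rset : pt2 -> Prop) (S : vec3 -> Prop) :
  eps > 0 -> bounded2 Omega -> open2 Omega ->
  spin_field eps Omega u -> is_region eps u Rset ->
  admissible_surface eps u Rset S ->
  exists uR : vec3, on_sphere uR /\ S uR /\ forall z, S z -> dot3 uR z >= 0.
Proof.
  intros Heps Hbnd _ Hsf Hreg [[Hns HS] | [_ [h [Hh [Horth HS]]]]].
  - destruct (values_finite eps Omega u Rset Heps Hbnd Hsf Hreg) as [W HW].
    destruct (finite_cone_dual_vector _ W HW Hns) as [p [Hp [Hp0 Hdual]]].
    exact (pole_of_dual_vector _ S p Hp Hp0 Hdual HS).
  - exact (pole_of_orthogonal_vector _ S h Hh Horth HS).
Qed.
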